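(* Let $G$ be a connected graph with $n$ vertices and let $l\ge 2$. Let $B_{n\times l}^2$ be a graph obtained from $l$ disjoint copies $G_{n,1},\dots,G_{n,l}$ of $G$ by adding, for each $1\le i\le l-1$, a single edge joining some vertex of $G_{n,i}$ to some vertex of $G_{n,i+1}$. Then $$0 < \lambda_2(B_{n\times l}^2) \le 2.$$
   Context: All graphs are finite, simple and unweighted. For a graph $H$ with adjacency matrix $A$ and diagonal degree matrix $D$, the graph Laplacian is $L_H = D - A$, with eigenvalues ordered $0=\lambda_1 \le \lambda_2 \le \dots$; $\lambda_2(H)$ denotes the second smallest eigenvalue of $L_H$. *)

From HB Require Import structures.
From mathcomp Require Import all_boot all_order all_algebra.
From mathcomp.real_closed Require Import polyrcf.
Set Implicit Arguments. Unset Strict Implicit. Unset Printing Implicit Defensive.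
Import Order.TTheory GRing.Theory Num.Theory.
Local Open Scope ring_scope.

Definition simple_graph (V : finType) (e : rel V) : Prop :=
  symmetric e /\ irreflexive e.

Definition connected_graph (V : finType) (e : rel V) : Prop :=
  forall x y : V, connect e x y.

Definition laplacian (R : nzRingType) (V : finType) (e : rel V) : 'M[R]_#|V| :=
  \matrix_(i, j)
    ((i == j)%:R * (#|[pred y | e (enum_val i) y]|)%:R
     - (e (enum_val i) (enum_val j))%:R).

(* The eigenvalues of a square matrix over a real closed field, listed in
   nondecreasing order and repeated according to their (algebraic)
   multiplicity as roots of the characteristic polynomial.  For a real
   symmetric matrix (e.g. a Laplacian) the characteristic polynomial splits,
   so this is the full spectrum. *)
Definition spectrum (R : rcfType) (m : nat) (A : 'M[R]_m) : seq R :=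
  flatten [seq nseq (mup x (char_poly A)) x | x <- rootsR (char_poly A)].

(* lambda_k(A): the k-th smallest eigenvalue (1-indexed), as in the paper. *)
Definition lambda (R : rcfType) (m : nat) (A : 'M[R]_m) (k : nat) : R :=
  nth 0 (spectrum A) k.-1.

Definition lambda2 (R : rcfType) (V : finType) (e : rel V) : R :=
  lambda (laplacian R e) 2.

(* The graph B^2_{n x l}: l disjoint copies of (T, g), vertex (i, x) being
   vertex x of copy i, and for each i with i+1 < l an extra edge joining
   vertex (a i) of copy i to vertex (b i) of copy i+1. *)
Definition chain_graph (T : finType) (g : rel T) (l : nat) (a b : 'I_l -> T)
  : rel ('I_l * T) :=
  fun u v =>
    ((u.1 == v.1) && g u.2 v.2)
    || [&& (u.1.+1 == v.1 :> nat), u.2 == a u.1 & v.2 == b u.1]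
    || [&& (v.1.+1 == u.1 :> nat), v.2 == a v.1 & u.2 == b v.1].

From HB Require Import structures.
From mathcomp Require Import all_boot all_order all_algebra.
From mathcomp.real_closed Require Import polyrcf complex.
From mathcomp Require Import ring zify.
Set Implicit Arguments. Unset Strict Implicit. Unset Printing Implicit Defensive.
Import Order.TTheory GRing.Theory Num.Theory.
Local Open Scope ring_scope.

(* The Laplacian L of a graph satisfies 2 u*Lu = sum of |u_x - u_y|^2 over adjacent ordered
   pairs (x, y), so it is positive semidefinite and, for a connected graph, its quadratic form
   vanishes only on constant vectors: 0 is a simple eigenvalue and lambda_2 > 0.  For the upper
   bound, let chi be the indicator of the first copy.  The bridge between the first two copies
   is the only edge cut by chi, so the quadratic form of a*1 + b*chi is |b|^2, which is at most
   twice its squared norm; by the min-max principle at least two eigenvalues are at most 2.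
   The min-max step uses the spectral theorem for Hermitian matrices over the complexification
   R[i]; the eigenvalues found there are real and are the roots of the real characteristic
   polynomial. *)

Lemma count_flatten_nseq (T : eqType) (f : T -> nat) (s : seq T) (y : T) :
  count_mem y (flatten [seq nseq (f x) x | x <- s]) = (count_mem y s * f y)%N.
Proof.
elim: s => [|x s IHs] //=; rewrite count_cat IHs count_nseq /=.
by case: eqP => [->|_]; rewrite ?mul1n ?mul0n.
Qed.

Lemma sorted_flatten_nseq (R : numDomainType) (f : R -> nat) (s : seq R) :
  sorted <%R s -> sorted <=%R (flatten [seq nseq (f x) x | x <- s]).
Proof.
rewrite sorted_pairwise ?(sorted_pairwise le_trans) //; last exact: lt_trans.
elim: s => [|x s IHs] //= /andP[x_lt_s /IHs s_sorted].
rewrite pairwise_cat s_sorted andbT; apply/andP; split.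
  apply/allrelP => y z /nseqP[-> _] /flatten_mapP[t t_in_s /nseqP[-> _]].
  exact/ltW/(allP x_lt_s).
by elim: (f x) => //= k ->; rewrite andbT; apply/allP => y /nseqP[->].
Qed.

Lemma spectrum_prod_XsubC (R : rcfType) n (A : 'M[R]_n) (s : seq R) :
  char_poly A = \prod_(x <- s) ('X - x%:P) -> spectrum A = sort <=%R s.
Proof.
move=> charA; have charA_neq0 : char_poly A != 0.
  by rewrite charA monic_neq0 // monic_prod_XsubC.
apply: (sorted_eq le_trans le_anti).
- exact/sorted_flatten_nseq/sorted_roots.
- exact/sort_sorted/le_total.
apply/allP => y _ /=; apply/eqP.
rewrite count_flatten_nseq count_uniq_mem ?uniq_roots // count_sort.
rewrite -(mu_prod_XsubC y s) -charA.
have := roots_on_rootsR charA_neq0 y; rewrite in_itv /= => <-.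
by have [_|/mupNroot->] := boolP (root _ y); rewrite ?mul1n ?muln0.
Qed.

Lemma sort_nth1_bounds (R : realDomainType) (s : seq R) (c : R) :
  (count (<= 0)%R s <= 1)%N -> (2 <= count (<= c)%R s)%N ->
  0 < nth 0 (sort <=%R s) 1 <= c.
Proof.
rewrite -(count_sort <=%R) -[X in (2 <= X)%N](count_sort <=%R).
have := sort_sorted (@le_total _ R) s.
case: (sort <=%R s) => [|x0 [|x1 t]] /=; [by [] | by move=> _ _; case: (_ <= _) |].
move=> /andP[x01 x1_le_t] le1 ge2.
have t_ge_x1 : all (>= x1) t by apply: order_path_min => //; exact: le_trans.
apply/andP; split.
  by rewrite ltNge; apply: contraTN le1 => x1_le0; rewrite x1_le0 (le_trans x01).
rewrite leNgt; apply: contraTN ge2 => c_lt_x1; rewrite -leqNgt.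
have -> : count (<= c) t = 0%N.
  apply/eqP; rewrite -leqn0 leqNgt -has_count; apply/hasPn => y /(allP t_ge_x1).
  by move=> /(lt_le_trans c_lt_x1); rewrite ltNge.
by rewrite (leNgt x1) c_lt_x1 addn0; case: (_ <= _)%R.
Qed.

Lemma char_poly_conj (R : comUnitRingType) n (P A : 'M[R]_n) :
  P \in unitmx -> char_poly (invmx P *m A *m P) = char_poly A.
Proof.
move=> P_unit; rewrite /char_poly /char_poly_mx.
have -> : 'X%:M - map_mx polyC (invmx P *m A *m P) =
    map_mx polyC (invmx P) *m ('X%:M - map_mx polyC A) *m map_mx polyC P.
  rewrite mulmxBr mulmxBl mul_mx_scalar -scalemxAl -map_mxM mulVmx //.
  by rewrite map_mx1 scalemx1 !map_mxM.
rewrite !det_mulmx mulrC mulrA -det_mulmx -map_mxM mulmxV // map_mx1.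
by rewrite det1 mul1r.
Qed.

Local Open Scope sesquilinear_scope.
Local Notation "''[' u , v ]" := (dotmx u v) : ring_scope.
Local Notation "''[' u ]" := (dotmx u u) : ring_scope.

Lemma dotmx_mulmxl (C : numClosedFieldType) m n (A : 'M[C]_(m, n)) u v :
  '[u *m A, v] = '[u, v *m A^t*].
Proof. by rewrite !dotmxE trmx_mul map_mxM trmxCK mulmxA. Qed.

Lemma dnormE (C : numClosedFieldType) n (u : 'rV[C]_n) :
  '[u] = \sum_i `|u 0 i| ^+ 2.
Proof. by rewrite dotmxE mxE; apply: eq_bigr => i _; rewrite !mxE normCK. Qed.

Section Hermitian.
Variables (C : numClosedFieldType) (n : nat) (M : 'M[C]_n).
Hypothesis M_herm : M \is hermsymmx.

Local Notation P := (spectralmx M).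
Local Notation d := (spectral_diag M).

Lemma spectral_mulmxtV : P^t* *m P = 1%:M.
Proof. by rewrite -invmx_unitary ?spectral_unitarymx // mulVmx ?spectral_unit. Qed.

Lemma hermitian_spectral_decomposition : M = P^t* *m diag_mx d *m P.
Proof.
rewrite -invmx_unitary ?spectral_unitarymx //.
exact/orthomx_spectralP/hermitian_normalmx.
Qed.

Lemma char_poly_hermitian : char_poly M = \prod_j ('X - (d 0 j)%:P).
Proof.
rewrite {1}hermitian_spectral_decomposition -invmx_unitary ?spectral_unitarymx //.
rewrite char_poly_conj ?spectral_unit // char_poly_trig ?diag_mx_is_trig //.
by apply: eq_bigr => j _; rewrite mxE eqxx mulr1n.
Qed.

Lemma spectral_diag_real j : d 0 j \is Num.real.
Proof. exact/mxOverP/hermitian_spectral_diag_real. Qed.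

Lemma dotmx_spectral u v : '[u, v] = '[u *m P^t*, v *m P^t*].
Proof. by rewrite dotmx_mulmxl trmxCK -mulmxA spectral_mulmxtV mulmx1. Qed.

Lemma dnorm_spectral u : '[u] = \sum_j `|(u *m P^t*) 0 j| ^+ 2.
Proof. by rewrite dotmx_spectral dnormE. Qed.

Lemma quad_spectral u : '[u *m M, u] = \sum_j d 0 j * `|(u *m P^t*) 0 j| ^+ 2.
Proof.
rewrite {1}hermitian_spectral_decomposition !mulmxA dotmx_mulmxl dotmxE mxE.
apply: eq_bigr => j _.
by rewrite mul_mx_diag !mxE normCK mulrA (mulrC (d 0 j)).
Qed.

Lemma spectral_row_quad j : '[row j P *m M, row j P] = d 0 j.
Proof.
have row_coord : row j P *m P^t* = delta_mx 0 j.
  by rewrite -row_mul (unitarymxP (spectral_unitarymx M)) row1.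
rewrite quad_spectral row_coord (bigD1 j) //= big1 ?addr0.
  by rewrite mxE !eqxx normr1 expr1n mulr1.
by move=> k k_neq_j; rewrite mxE eqxx (negbTE k_neq_j) normr0 expr0n mulr0.
Qed.

Lemma quad_gt_spectral (c : C) u : c \is Num.real -> u != 0 ->
    (forall j, d 0 j <= c -> (u *m P^t*) 0 j = 0) -> c * '[u] < '[u *m M, u].
Proof.
move=> c_real u_neq0 u_orth; pose x := u *m P^t*.
have x_small j : d 0 j <= c -> `|x 0 j| ^+ 2 = 0.
  by move=> /u_orth ->; rewrite normr0 expr0n.
have x_large j : ~~ (d 0 j <= c) -> c < d 0 j.
  by rewrite -real_ltNge ?spectral_diag_real.
have [j x_j_neq0] : exists j, x 0 j != 0.
  apply/existsP; apply: contraNT u_neq0; rewrite negb_exists => /forallP x0.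
  have x_eq0 : x = 0 by apply/rowP => i; have := x0 i; rewrite negbK [RHS]mxE => /eqP.
  by apply/eqP; rewrite -[u]mulmx1 -spectral_mulmxtV mulmxA -/x x_eq0 mul0mx.
rewrite dnorm_spectral quad_spectral mulr_sumr -subr_gt0 -sumrB.
under eq_bigr do rewrite -mulrBl.
rewrite (bigD1 j) //= ltr_wpDr //.
  apply: sumr_ge0 => k _; have [/x_small -> | /x_large c_lt_d] := boolP (d 0 k <= c).
    by rewrite mulr0.
  by apply: mulr_ge0; [rewrite subr_ge0 ltW | rewrite exprn_ge0].
have c_lt_d : c < d 0 j by apply: x_large; apply: contra x_j_neq0 => /u_orth ->.
by apply: mulr_gt0; rewrite ?subr_gt0 ?exprn_gt0 ?normr_gt0.
Qed.

Lemma spectral_card_le_ge2 (c : C) (u w : 'rV_n) : c \is Num.real ->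
    (forall a b : C, a *: u + b *: w = 0 -> a = 0 /\ b = 0) ->
    (forall a b : C,
      '[(a *: u + b *: w) *m M, a *: u + b *: w] <= c * '[a *: u + b *: w]) ->
  (1 < #|[pred j | (d 0 j <= c)%R]|)%N.
Proof.
move=> c_real uw_free uw_bound; rewrite ltnNge; apply/negP => /card_le1_eqP small_uniq.
suff [a [b [ab_neq0 v_orth]]] : exists a b, (a, b) != (0, 0) /\
    forall j, d 0 j <= c -> ((a *: u + b *: w) *m P^t*) 0 j = 0.
  have v_neq0 : a *: u + b *: w != 0.
    by apply: contra ab_neq0 => /eqP /uw_free[-> ->].
  by move: (quad_gt_spectral c_real v_neq0 v_orth) => /lt_geF; rewrite uw_bound.
have coordE a b j : ((a *: u + b *: w) *m P^t*) 0 j =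
    a * (u *m P^t*) 0 j + b * (w *m P^t*) 0 j.
  by rewrite mulmxDl -!scalemxAl !mxE.
have [j0 j0_small | no_small] := pickP [pred j | d 0 j <= c]; last first.
  exists 0, 1; split; first by rewrite xpair_eqE oner_eq0 andbF.
  by move=> j j_small; move: (no_small j); rewrite /= j_small.
have only_j0 j : d 0 j <= c -> j = j0 by move=> j_small; exact: small_uniq.
have [u0 | u_neq0] := eqVneq ((u *m P^t*) 0 j0) 0.
  exists 1, 0; split; first by rewrite xpair_eqE oner_eq0.
  by move=> j /only_j0 ->; rewrite coordE u0 mul0r mulr0 addr0.
exists ((w *m P^t*) 0 j0), (- (u *m P^t*) 0 j0); split.
  by rewrite xpair_eqE oppr_eq0 (negbTE u_neq0) andbF.
by move=> j /only_j0 ->; rewrite coordE mulNr mulrC subrr.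
Qed.

Lemma spectral_card_eq0_le1 :
    (forall u, '[u *m M, u] = 0 -> forall i k, u 0 i = u 0 k) ->
  (#|[pred j | (d 0 j == 0)%R]| <= 1)%N.
Proof.
move=> ker_const; apply/card_le1_eqP => j k /eqP dj0 /eqP dk0.
have P_orthonormal := row_unitarymxP (spectral_unitarymx M).
have row_const i : d 0 i = 0 -> row i P = P i j *: const_mx 1.
  move=> di0; apply/rowP => x; rewrite !mxE mulr1.
  by have := ker_const (row i P) _ x j; rewrite !mxE; apply; rewrite spectral_row_quad.
have := P_orthonormal j k; have := P_orthonormal k k; have := P_orthonormal j j.
rewrite (row_const j dj0) (row_const k dk0) !eqxx !dnormZ.
rewrite linearZl_LR linearZr_LR /= mulrA.
pose N := '[const_mx 1 : 'rV[C]_n].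
have unit_factors z : `|z| ^+ 2 * N = 1 -> (z != 0) && (N != 0).
  move=> /eqP; apply: contraTT; rewrite negb_and !negbK => /orP[] /eqP ->.
    by rewrite normr0 expr0n mul0r eq_sym oner_eq0.
  by rewrite mulr0 eq_sym oner_eq0.
move=> /unit_factors/andP[Pjj_neq0 N_neq0] /unit_factors/andP[Pkj_neq0 _].
have [-> // | j_neq_k] := eqVneq j k.
by move=> /eqP; apply: contraTeq => _; rewrite !mulf_neq0 ?conjC_eq0.
Qed.

End Hermitian.

Lemma sum_enum_val (R : nmodType) (V : finType) (F : V -> R) :
  \sum_(i < #|V|) F (enum_val i) = \sum_x F x.
Proof. by rewrite -big_enum_val. Qed.

Section IndicatorVectors.
Variables (C : numClosedFieldType) (V : finType) (S : {pred V}) (p q : V).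
Hypotheses (pS : p \in S) (qNS : q \notin S).

Definition indicator_mx : 'rV[C]_#|V| := \row_i (enum_val i \in S)%:R.

Local Notation v a b := (a *: const_mx 1 + b *: indicator_mx).

Lemma indicator_mxE a b x : v a b 0 (enum_rank x) = a + b * (x \in S)%:R.
Proof. by rewrite !mxE enum_rankK mulr1. Qed.

Lemma indicator_free a b : v a b = 0 -> a = 0 /\ b = 0.
Proof.
move=> /rowP v0; have := v0 (enum_rank q); have := v0 (enum_rank p).
rewrite !indicator_mxE (negbTE qNS) pS !mxE mulr1 mulr0 addr0 => + a0.
by rewrite a0 add0r.
Qed.

Lemma indicator_dnorm_ge a b : `|b| ^+ 2 <= 2 * '[v a b].
Proof.
have p_neq_q : enum_rank p != enum_rank q.
  by apply: contraNneq qNS => /enum_rank_inj <-.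
have : `|a + b| ^+ 2 + `|a| ^+ 2 <= '[v a b].
  rewrite dnormE (bigD1 (enum_rank p)) //= (bigD1 (enum_rank q)) 1?eq_sym //=.
  rewrite !indicator_mxE pS (negbTE qNS) mulr1 mulr0 addr0 addrA lerDl.
  by apply: sumr_ge0 => i _; apply: exprn_ge0.
move=> /(ler_wpM2l (ler0n _ 2)); apply: le_trans; rewrite -subr_ge0 !normCK.
have -> : 2 * ((a + b) * (a + b)^* + a * a^*) - b * b^* = (2 * a + b) * (2 * a + b)^*.
  by rewrite !rmorphD !rmorphM /= conjC_nat; ring.
exact: mul_conjC_ge0.
Qed.

End IndicatorVectors.

Section Laplacian.
Variables (C : numClosedFieldType) (V : finType) (e : rel V).
Hypothesis e_sym : symmetric e.

Local Notation L := (laplacian C e).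

Lemma laplacian_hermitian : L \is hermsymmx.
Proof.
apply/is_hermitianmxP; rewrite expr0 scale1r; apply/matrixP => i j.
rewrite !mxE rmorphB rmorphM /= !conjC_nat.
by have [->|i_neq_j] := eqVneq i j; rewrite // !mul0r e_sym.
Qed.

Lemma laplacian_quad (u : 'rV[C]_#|V|) :
  2 * '[u *m L, u] =
    \sum_x \sum_y (e x y)%:R * `|u 0 (enum_rank x) - u 0 (enum_rank y)| ^+ 2.
Proof.
pose a (i j : 'I_#|V|) : C := (e (enum_val i) (enum_val j))%:R.
have quadE : '[u *m L, u] =
    \sum_i \sum_j a i j * (u 0 i * (u 0 i)^* - u 0 i * (u 0 j)^*).
  rewrite dotmxE mxE; under eq_bigr do rewrite !mxE big_distrl /=.
  rewrite exchange_big /=; apply: eq_bigr => i _.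
  under eq_bigr do rewrite mxE mulrBr mulrBl.
  rewrite sumrB (bigD1 i) //= [X in _ + X - _]big1 => [|j j_neq_i]; last first.
    by rewrite eq_sym (negbTE j_neq_i) !mul0r mulr0 mul0r.
  have degE : #|[pred y | e (enum_val i) y]|%:R = \sum_j a i j.
    rewrite -(sum1_card [pred y | e (enum_val i) y]) natr_sum big_mkcond /=.
    by rewrite -sum_enum_val; apply: eq_bigr => j _; rewrite /a inE; case: (e _ _).
  rewrite eqxx mul1r addr0 degE mulr_sumr mulr_suml -sumrB.
  by apply: eq_bigr => j _; rewrite /a; ring.
have -> : \sum_x \sum_y (e x y)%:R * `|u 0 (enum_rank x) - u 0 (enum_rank y)| ^+ 2 =
    \sum_i \sum_j (a i j * (u 0 i * (u 0 i)^* - u 0 i * (u 0 j)^*) +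
                   a j i * (u 0 j * (u 0 j)^* - u 0 j * (u 0 i)^*)).
  rewrite -sum_enum_val; apply: eq_bigr => i _; rewrite -sum_enum_val.
  apply: eq_bigr => j _; rewrite !enum_valK normCK /a (e_sym (enum_val j)).
  by rewrite rmorphB /=; ring.
under eq_bigr do rewrite big_split /=.
by rewrite big_split /= [X in _ + X]exchange_big /= -quadE mulr_natl mulr2n.
Qed.

Lemma laplacian_quad_ge0 u : 0 <= '[u *m L, u].
Proof.
have : 0 <= 2 * '[u *m L, u].
  rewrite laplacian_quad; apply: sumr_ge0 => x _; apply: sumr_ge0 => y _.
  by rewrite mulr_ge0 ?ler0n ?exprn_ge0.
by rewrite pmulr_rge0 ?ltr0n.
Qed.

Lemma laplacian_quad_eq0 : connected_graph e ->
  forall u, '[u *m L, u] = 0 -> forall i k, u 0 i = u 0 k.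
Proof.
move=> e_conn u /(congr1 ( *%R 2)); rewrite mulr0 laplacian_quad => /eqP.
rewrite psumr_eq0 => [/allP edge_terms_eq0|x _]; last first.
  by apply: sumr_ge0 => y _; rewrite mulr_ge0 ?ler0n ?exprn_ge0.
pose f x := u 0 (enum_rank x).
have f_edge x y : e x y -> f x = f y.
  move=> exy; move: (edge_terms_eq0 x (mem_index_enum x)) => /implyP /(_ isT).
  rewrite psumr_eq0 => [/allP /(_ y (mem_index_enum y)) /implyP /(_ isT)|z _].
    by rewrite exy mul1r sqrf_eq0 normr_eq0 subr_eq0 => /eqP.
  by rewrite mulr_ge0 ?ler0n ?exprn_ge0.
move=> j k; rewrite -[j]enum_valK -[k]enum_valK -/(f _) -/(f _).
have f_closed : closed e [pred z | f z == f (enum_val j)].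
  by move=> x y /f_edge; rewrite !inE => ->.
have := closed_connect f_closed (e_conn (enum_val j) (enum_val k)).
by rewrite !inE eqxx => /esym/eqP.
Qed.

Lemma laplacian_quad_indicator (S : {pred V}) (a b : C) :
  let v := a *: const_mx 1 + b *: indicator_mx C S in
  2 * '[v *m L, v] =
    `|b| ^+ 2 * \sum_x \sum_y (e x y && ((x \in S) != (y \in S)))%:R.
Proof.
rewrite /= laplacian_quad mulr_sumr; apply: eq_bigr => x _.
rewrite mulr_sumr; apply: eq_bigr => y _; rewrite !indicator_mxE.
case: (e x y) (x \in S) (y \in S) => [] [] []; rewrite /= ?mul0r ?mulr0 //.
all: rewrite mul1r ?mulr1 ?addr0.
- by rewrite subrr normr0 expr0n.
- by rewrite addrC addKr.
- by rewrite opprD addNKr normrN.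
- by rewrite subrr normr0 expr0n.
Qed.

End Laplacian.

Section ChainGraph.
Variables (T : finType) (g : rel T) (l : nat) (a b : 'I_l -> T).
Hypothesis g_sym : symmetric g.

Local Notation e := (chain_graph g a b).

Lemma chain_graph_sym : symmetric e.
Proof.
move=> u v; rewrite /chain_graph eq_sym (g_sym u.2).
by rewrite -orbA [X in _ || X]orbC orbA.
Qed.

Hypothesis g_conn : connected_graph g.

Lemma chain_graph_in_copy i x y : connect e (i, x) (i, y).
Proof.
have /connectP[p gp ->] := g_conn x y.
elim: p x gp => [|z p IHp] x /= => [_|/andP[gxz gp]]; first exact: connect0.
apply: connect_trans (IHp z gp); apply: connect1.
by rewrite /chain_graph /= eqxx gxz.
Qed.

Lemma chain_graph_connected : connected_graph e.
Proof.
have up k (i j : 'I_l) x y : j = (i + k)%N :> nat -> connect e (i, x) (j, y).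
  elim: k j y => [|k IHk] j y j_eq.
    by rewrite addn0 in j_eq; rewrite (val_inj j_eq); exact: chain_graph_in_copy.
  have k_lt_l : (i + k < l)%N by have := ltn_ord j; rewrite j_eq; lia.
  pose j' := Ordinal k_lt_l.
  apply: connect_trans (IHk j' (a j') erefl) _.
  apply: connect_trans (chain_graph_in_copy j (b j') y); apply: connect1.
  by rewrite /chain_graph /= j_eq addnS !eqxx orbT.
move=> [i x] [j y]; have [i_le_j|/ltnW j_le_i] := leqP i j.
  by apply: (up (j - i)%N); rewrite subnKC.
rewrite (sym_connect_sym chain_graph_sym).
by apply: (up (i - j)%N); rewrite subnKC.
Qed.

End ChainGraph.

Section ChainCut.
Variables (T : finType) (g : rel T) (l : nat) (a b : 'I_l.+2 -> T).

Local Notation e := (chain_graph g a b).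
Local Notation first_copy := [pred u : 'I_l.+2 * T | u.1 == ord0].

Let bridge0 : 'I_l.+2 * T := (ord0, a ord0).
Let bridge1 : 'I_l.+2 * T := (Ordinal (isT : (1 < l.+2)%N), b ord0).

Lemma chain_cut_edge u w :
  e u w && ((u \in first_copy) != (w \in first_copy)) =
    ((u, w) \in [set (bridge0, bridge1); (bridge1, bridge0)]).
Proof.
have ord0E (lt0 : (0 < l.+2)%N) : Ordinal lt0 = ord0 by exact: val_inj.
have ord1E (lt1 : (1 < l.+2)%N) : Ordinal lt1 = bridge1.1 by exact: val_inj.
case: u w => [[[|[|i]] lt_i] x] [[[|[|j]] lt_j] y];
  rewrite !inE /chain_graph /bridge0 /bridge1 /= ?ord0E ?ord1E !xpair_eqE /=;
  rewrite ?eqxx ?andbF ?andbT ?orbF //=.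
all: by case: (x == _); case: (y == _).
Qed.

Lemma chain_cut_size (R : nzRingType) :
  \sum_u \sum_w (e u w && ((u \in first_copy) != (w \in first_copy)))%:R = 2 :> R.
Proof.
under eq_bigr do under eq_bigr do rewrite chain_cut_edge.
rewrite pair_bigA (eq_bigr (fun uw => if uw \in [set (bridge0, bridge1); (bridge1, bridge0)] then 1 else 0)).
  by rewrite -big_mkcond sumr_const cards2.
by move=> [u w] _; case: (_ \in _).
Qed.

Lemma chain_test_free (C : numClosedFieldType) (x y : C) :
  x *: const_mx 1 + y *: indicator_mx C first_copy = 0 -> x = 0 /\ y = 0.
Proof. exact: (indicator_free (p := bridge0) (q := bridge1)). Qed.

Hypothesis g_sym : symmetric g.

Lemma chain_test_quad (C : numClosedFieldType) (x y : C) :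
  let v := x *: const_mx 1 + y *: indicator_mx C first_copy in
  '[v *m laplacian C e, v] <= 2 * '[v].
Proof.
have two_neq0 : (2 : C) != 0 by rewrite pnatr_eq0.
have := laplacian_quad_indicator (chain_graph_sym a b g_sym) first_copy x y.
rewrite /= chain_cut_size mulrC => /(mulIf two_neq0) ->.
exact: (indicator_dnorm_ge (p := bridge0) (q := bridge1)).
Qed.

End ChainCut.

Lemma map_laplacian (R S : nzRingType) (f : {rmorphism R -> S}) (V : finType)
    (e : rel V) :
  map_mx f (laplacian R e) = laplacian S e.
Proof. by apply/matrixP => i j; rewrite !mxE rmorphB rmorphM /= !rmorph_nat. Qed.

Section ComplexifiedSpectrum.
Variables (R : rcfType) (n : nat) (A : 'M[R]_n).
Hypothesis A_herm : map_mx (real_complex R) A \is hermsymmx.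

Local Notation d := (spectral_diag (map_mx (real_complex R) A)).

Lemma spectrum_complexify :
  spectrum A = sort <=%R [seq complex.Re (d 0 j) | j <- enum 'I_n].
Proof.
apply: spectrum_prod_XsubC; apply: (map_poly_inj (real_complex R)).
rewrite map_char_poly char_poly_hermitian // map_prod_XsubC big_map big_enum /=.
by apply: eq_bigr => j _; rewrite RRe_real // spectral_diag_real.
Qed.

Lemma count_le_spectrum_complexify (c : R) :
  count (<= c)%R [seq complex.Re (d 0 j) | j <- enum 'I_n] =
    #|[pred j | (d 0 j <= c%:C)%C]|.
Proof.
rewrite count_map cardE /enum_mem size_filter count_filter; apply: eq_count => j.
by rewrite !inE /= andbT -lecR RRe_real // spectral_diag_real.
Qed.

End ComplexifiedSpectrum.

Lemma laplacian_lambda2_bounds (R : rcfType) (V : finType) (e : rel V) (c : R)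
    (u w : 'rV[R[i]]_#|V|) :
  symmetric e -> connected_graph e ->
  (forall x y : R[i], x *: u + y *: w = 0 -> x = 0 /\ y = 0) ->
  (forall x y : R[i], '[(x *: u + y *: w) *m laplacian R[i] e, x *: u + y *: w]
                        <= c%:C%C * '[x *: u + y *: w]) ->
  0 < lambda2 R e <= c.
Proof.
move=> e_sym e_conn uw_free uw_bound.
have L_herm : laplacian R[i] e \is hermsymmx := laplacian_hermitian _ e_sym.
have Lc_herm : map_mx (real_complex R) (laplacian R e) \is hermsymmx.
  by rewrite map_laplacian.
pose d := spectral_diag (laplacian R[i] e).
have d_ge0 j : 0 <= d 0 j by rewrite -spectral_row_quad // laplacian_quad_ge0.
rewrite /lambda2 /lambda spectrum_complexify //=.
apply: sort_nth1_bounds; rewrite !count_le_spectrum_complexify // map_laplacian.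
  rewrite rmorph0 (eq_card (B := [pred j | d 0 j == 0])) => [|j].
    exact: spectral_card_eq0_le1 L_herm (laplacian_quad_eq0 e_sym e_conn).
  by rewrite !inE eq_le d_ge0 andbT.
have c_real : c%:C%C \is Num.real by apply/complex_realP; exists c.
exact (spectral_card_le_ge2 L_herm c_real uw_free uw_bound).
Qed.

Theorem theorem6p4 (R : rcfType) (T : finType) (g : rel T) (l : nat)
    (a b : 'I_l -> T) :
  simple_graph g -> connected_graph g -> (0 < #|T|)%N -> (2 <= l)%N ->
  0 < lambda2 R (chain_graph g a b) <= 2.
Proof.
move=> [g_sym _] g_conn _; case: l a b => [|[|l]] a b // _.
apply: (laplacian_lambda2_bounds (u := const_mx 1)
          (w := indicator_mx R[i] [pred u : 'I_l.+2 * T | u.1 == ord0])).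
- exact: chain_graph_sym.
- exact: chain_graph_connected.
- exact: chain_test_free.
- move=> x y; rewrite (rmorph_nat (real_complex R) 2).
  exact (chain_test_quad a b g_sym x y).
Qed.
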